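(* In the algebra $\mathcal{B}_d$, every monomial of the form $e^{(a)}\binom{H_1}{b}f^{(c)}$ (with $a,b,c\ge0$) of degree $a+b+c=d+1$ is expressible as a $\mathbb{Q}$-linear combination of monomials of the same form $e^{(a')}\binom{H_1}{b'}f^{(c')}$ of strictly smaller degree $a'+b'+c'$ and strictly smaller height $a'+c'$. The same holds for monomials of the form $f^{(a)}\binom{H_2}{b}e^{(c)}$ (expressed via monomials $f^{(a')}\binom{H_2}{b'}e^{(c')}$).
   Context: Fix an integer $d\ge 0$. $\mathcal{B}_d$ is the associative $\mathbb{Q}$-algebra with $1$ generated by $e,f,H_1,H_2$ subject to the relations $H_1H_2=H_2H_1$, $H_1e-eH_1=e$, $H_1f-fH_1=-f$, $H_2e-eH_2=-e$, $H_2f-fH_2=f$, $ef-fe=H_1-H_2$, $H_1+H_2=d$, and $H_1(H_1-1)\cdots(H_1-d)=0$. For an element $T$ and integer $m\ge 0$, $T^{(m)}=T^m/m!$ and $\binom{T}{m}=T(T-1)\cdots(T-m+1)/m!$. The monomial $e^{(a)}\binom{H_1}{b}f^{(c)}$ (resp. $f^{(a)}\binom{H_2}{b}e^{(c)}$) has degree $a+b+c$ and height $a+c$. *)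

From HB Require Import structures.
From mathcomp Require Import all_boot all_order all_algebra.
Set Implicit Arguments. Unset Strict Implicit. Unset Printing Implicit Defensive.
Import Order.TTheory GRing.Theory Num.Theory.
Local Open Scope ring_scope.

Section Bd.
Variable A : algType rat.

Definition divpow (T : A) (m : nat) : A := (m`!%:R : rat)^-1 *: T ^+ m.

Definition binomA (T : A) (m : nat) : A :=
  (m`!%:R : rat)^-1 *: \prod_(i < m) (T - i%:R).

Definition Bd_rel (d : nat) (e f H1 H2 : A) : Prop :=
  H1 * H2 = H2 * H1 /\
  H1 * e - e * H1 = e /\
  H1 * f - f * H1 = - f /\
  H2 * e - e * H2 = - e /\
  H2 * f - f * H2 = f /\
  e * f - f * e = H1 - H2 /\
  H1 + H2 = d%:R /\
  \prod_(i < d.+1) (H1 - i%:R) = 0.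

Definition monoEF (e f H1 : A) (t : nat * nat * nat) : A :=
  divpow e t.1.1 * binomA H1 t.1.2 * divpow f t.2.

Definition monoFE (e f H2 : A) (t : nat * nat * nat) : A :=
  divpow f t.1.1 * binomA H2 t.1.2 * divpow e t.2.

End Bd.

Definition deg (t : nat * nat * nat) : nat := (t.1.1 + t.1.2 + t.2)%N.
Definition height (t : nat * nat * nat) : nat := (t.1.1 + t.2)%N.

From mathcomp Require Import all_boot all_algebra.
From mathcomp Require Import zify.
Set Implicit Arguments. Unset Strict Implicit. Unset Printing Implicit Defensive.
Import GRing.Theory Num.Theory.
Local Open Scope ring_scope.

(* H acts semisimply with eigenvalues 0, ..., d: reducing modulo
   \prod_i (X - i) and interpolating, every p(H) equals \sum_i p(i) P_i for
   the Lagrange idempotents P_i, which are H-weight vectors on both sides.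
   As e raises and f lowers the weight by one, e^a P_i = 0 when i + a > d,
   P_i f^c = 0 when i + c > d, and P_i f^c = f^c P_(i+c) otherwise.
   Expanding binom(H1, b) over the P_i leaves only the weights i >= b, for
   which i + a + c > d; then e^a P_i f^c = -[f^c, e^a] P_(i+c), and the
   commutator is a combination of ordered monomials e^a' p(H) f^c' with
   a' + c' <= a + c - 2.  Writing p in the falling factorial basis, these are
   handled by induction on a' + c'.  The second statement is the first one
   for the relations with (e, H1) and (f, H2) exchanged. *)

Section LinearCombinations.
Variables (R : pzRingType) (V : lmodType R) (T : Type) (gen : T -> V).

Definition lincomb (ok : pred T) (v : V) : Prop :=
  exists s : seq (R * T), all (fun p => ok p.2) s /\ v = \sum_(p <- s) p.1 *: gen p.2.

Variable ok : pred T.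

Lemma lincomb0 : lincomb ok 0.
Proof. by exists [::]; rewrite big_nil. Qed.

Lemma lincomb_gen t : ok t -> lincomb ok (gen t).
Proof. by move=> okt; exists [:: (1, t)]; rewrite /= okt big_seq1 scale1r. Qed.

Lemma lincombD u v : lincomb ok u -> lincomb ok v -> lincomb ok (u + v).
Proof.
move=> [s [oks ->]] [s' [oks' ->]].
by exists (s ++ s'); rewrite all_cat oks oks' big_cat.
Qed.

Lemma lincombZ k v : lincomb ok v -> lincomb ok (k *: v).
Proof.
move=> [s [oks ->]]; exists [seq (k * p.1, p.2) | p <- s]; split.
  by rewrite all_map.
by rewrite big_map scaler_sumr; apply: eq_bigr => p _; rewrite scalerA.
Qed.

Lemma lincomb_sum I (r : seq I) (P : pred I) (F : I -> V) :
  (forall i, P i -> lincomb ok (F i)) -> lincomb ok (\sum_(i <- r | P i) F i).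
Proof. by move=> okF; apply: big_ind => //; [exact: lincomb0 | exact: lincombD]. Qed.

Lemma lincomb_sub (ok' : pred T) v :
  (forall t, ok t -> ok' t) -> lincomb ok v -> lincomb ok' v.
Proof. by move=> sub [s [oks ->]]; exists s; split=> //; apply: sub_all oks => p /sub. Qed.

End LinearCombinations.

Lemma lincomb_map (R : pzRingType) (V W : lmodType R) (T T' : Type)
    (gen : T -> V) (ok : pred T) (gen' : T' -> W) (ok' : pred T')
    (phi : V -> W) :
  linear phi ->
  (forall t, ok t -> lincomb gen' ok' (phi (gen t))) ->
  forall v, lincomb gen ok v -> lincomb gen' ok' (phi v).
Proof.
move=> lin_phi okphi _ [s [oks ->]].
have phi0 : phi 0 = 0.
  by have := lin_phi (-1) 0 0; rewrite scaler0 addr0 scaleN1r addNr.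
elim: s oks => [_|p s IH /andP[okp oks]]; first by rewrite big_nil phi0; exact: lincomb0.
rewrite big_cons lin_phi.
by apply: lincombD; [apply: lincombZ; exact: okphi | exact: IH].
Qed.

Definition falling_poly (R : nzRingType) (j : nat) : {poly R} := \prod_(i < j) ('X - i%:R%:P).

Lemma falling_poly_span (R : nzRingType) (p : {poly R}) : lincomb (@falling_poly R) xpredT p.
Proof.
elim/poly_ind: p => [|p c IH]; first exact: lincomb0.
apply: lincombD; last first.
  have -> : c%:P = c *: falling_poly R 0 by rewrite /falling_poly big_ord0 alg_polyC.
  exact/lincombZ/lincomb_gen.
apply: (lincomb_map (phi := fun q => q * 'X)) IH => [k u v|j _].
  by rewrite mulrDl scalerAl.
have -> : falling_poly R j * 'X = falling_poly R j.+1 + j%:R *: falling_poly R j.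
  by rewrite /falling_poly big_ord_recr /= mulrBr polyC_natr mulr_natr -scaler_nat subrK.
by apply: lincombD; [|apply: lincombZ]; exact: lincomb_gen.
Qed.

Section Shifts.
Variables (R : comNzRingType) (A : algType R) (H : A).
Local Notation ev := (horner_alg H).

Definition shifts (x : A) (s : R) := H * x = x * (H + s%:A).

Lemma horner_alg_shifts x s p : shifts x s -> ev p * x = x * ev (p \Po ('X + s%:P)).
Proof.
move=> Hx; elim/poly_ind: p => [|p c IH]; first by rewrite comp_poly0 !rmorph0 mul0r mulr0.
rewrite comp_polyD comp_polyM comp_polyX comp_polyC !rmorphD !rmorphM /=.
rewrite !horner_algX !horner_algC mulrDl mulrDr -mulrA Hx mulrA IH mulrA.
by rewrite rmorphD /= horner_algX horner_algC mulr_algl mulr_algr.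
Qed.

Lemma shifts_horner_alg x s p : shifts x s -> x * ev p = ev (p \Po ('X - s%:P)) * x.
Proof.
move=> Hx; rewrite (horner_alg_shifts _ Hx) -comp_polyA comp_polyB comp_polyX comp_polyC.
by rewrite addrK comp_polyXr.
Qed.

Lemma shiftsX x s n : shifts x s -> shifts (x ^+ n) (s *+ n).
Proof.
move=> Hx; elim: n => [|n IH]; first by rewrite /shifts mulr0n scale0r addr0 expr0 mulr1 mul1r.
rewrite /shifts exprSr mulrA IH -mulrA mulrDl Hx mulr_algl -[(s *+ n) *: x]mulr_algr.
by rewrite -mulrDr mulrA -addrA -scalerDl -mulrS.
Qed.

Lemma shifts_lweight x s y l :
  shifts x s -> H * y = l *: y -> H * (x * y) = (l + s) *: (x * y).
Proof.
move=> Hx Hy; rewrite mulrA Hx -mulrA mulrDl Hy mulr_algl -scalerDl.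
by rewrite -scalerAr addrC.
Qed.

Lemma shifts_rweight x s y l :
  shifts x s -> y * H = l *: y -> y * x * H = (l - s) *: (y * x).
Proof.
move=> Hx Hy; have xH : x * H = H * x - s *: x by rewrite Hx mulrDr mulr_algr addrK.
by rewrite -mulrA xH mulrBr mulrA Hy -scalerAl -scalerAr scalerBl.
Qed.

Lemma lweight_horner_alg y l p : H * y = l *: y -> ev p * y = p.[l] *: y.
Proof.
move=> Hy; elim/poly_ind: p => [|p c IH]; first by rewrite rmorph0 horner0 mul0r scale0r.
rewrite rmorphD rmorphM /= horner_algX horner_algC mulrDl -mulrA Hy -scalerAr IH.
by rewrite mulr_algl hornerMXaddC scalerA scalerDl mulrC.
Qed.

Lemma rweight_horner_alg y l p : y * H = l *: y -> y * ev p = p.[l] *: y.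
Proof.
move=> Hy; elim/poly_ind: p => [|p c IH]; first by rewrite rmorph0 horner0 mulr0 scale0r.
rewrite rmorphD rmorphM /= horner_algX horner_algC mulrDr mulrA IH -scalerAl Hy.
by rewrite mulr_algr hornerMXaddC scalerA scalerDl.
Qed.

End Shifts.

Section Projectors.
Variables (F : numFieldType) (A : algType F) (d : nat) (H : A).
Hypothesis H_ann : \prod_(i < d.+1) (H - i%:R) = 0.
Local Notation ev := (horner_alg H).
Local Notation natr_inj := (mulrIn (oner_neq0 F)).

Definition ann_poly : {poly F} := \prod_(i < d.+1) ('X - i%:R%:P).

Definition proj (i : 'I_d.+1) : A := ev (tnth (lagrange d.+1 (fun k => k%:R)) i).

Lemma lagrange_nat (i : 'I_d.+1) (k : nat) : (k <= d)%N ->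
  (tnth (lagrange d.+1 (fun k => k%:R : F)) i).[k%:R] = (i == k :> nat)%:R.
Proof. by rewrite -ltnS => ltkd; rewrite (lagrange_sample _ natr_inj _ (Ordinal ltkd)). Qed.

Lemma horner_alg_ann : ev ann_poly = 0.
Proof.
rewrite -H_ann rmorph_prod; apply: eq_bigr => i _.
by rewrite rmorphB /= horner_algX horner_algC scaler_nat.
Qed.

Lemma horner_ann_poly l : ann_poly.[l] = \prod_(i < d.+1) (l - i%:R).
Proof. by rewrite horner_prod; apply: eq_bigr => i _; rewrite hornerXsubC. Qed.

Lemma horner_alg_proj (p : {poly F}) : ev p = \sum_(i < d.+1) p.[i%:R] *: proj i.
Proof.
have ann_neq0 : ann_poly != 0 by apply/monic_neq0/monic_prod_XsubC.
have size_ann : size ann_poly = d.+2.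
  by rewrite /ann_poly -big_enum size_prod_XsubC size_enum_ord.
have size_mod : (size (p %% ann_poly)%R <= d.+1)%N by rewrite -ltnS -size_ann ltn_modp.
have -> : ev p = ev (p %% ann_poly).
  by rewrite {1}(divp_eq p ann_poly) rmorphD rmorphM /= horner_alg_ann mulr0 add0r.
rewrite {1}(lagrange_gen (ltn0Sn d) natr_inj size_mod) raddf_sum; apply: eq_bigr => i _.
rewrite /= rmorphM /= horner_algC mulr_algl {2}(divp_eq p ann_poly) hornerD hornerM.
by rewrite horner_ann_poly (bigD1 i) //= subrr mul0r mulr0 add0r.
Qed.

Lemma horner_alg_mul_proj p i : ev p * proj i = p.[i%:R] *: proj i.
Proof.
have sample := lagrange_sample (ltn0Sn d) natr_inj.
rewrite /proj -rmorphM /= horner_alg_proj (bigD1 i) //= big1 ?addr0 => [|j ji].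
  by rewrite hornerM sample eqxx mulr1.
by rewrite hornerM sample eq_sym (negbTE ji) mulr0 scale0r.
Qed.

Lemma proj_lweight i : H * proj i = i%:R *: proj i.
Proof. by rewrite -{1}(horner_algX H) horner_alg_mul_proj hornerX. Qed.

Lemma proj_rweight i : proj i * H = i%:R *: proj i.
Proof. by rewrite -proj_lweight /proj -{2 3}(horner_algX H) -!rmorphM mulrC. Qed.

Lemma horner_ann_poly_neq0 l : (forall i : 'I_d.+1, l != i%:R) -> ann_poly.[l] != 0.
Proof.
by move=> l_not_nat; rewrite horner_ann_poly; apply/prodf_neq0 => i _; rewrite subr_eq0.
Qed.

Lemma lweight_eq0 y l : H * y = l *: y -> (forall i : 'I_d.+1, l != i%:R) -> y = 0.
Proof.
move=> Hy /horner_ann_poly_neq0 ann_l; have := lweight_horner_alg ann_poly Hy.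
by rewrite horner_alg_ann mul0r => /esym/eqP; rewrite scaler_eq0 (negbTE ann_l) => /eqP.
Qed.

Lemma rweight_eq0 y l : y * H = l *: y -> (forall i : 'I_d.+1, l != i%:R) -> y = 0.
Proof.
move=> Hy /horner_ann_poly_neq0 ann_l; have := rweight_horner_alg ann_poly Hy.
by rewrite horner_alg_ann mulr0 => /esym/eqP; rewrite scaler_eq0 (negbTE ann_l) => /eqP.
Qed.

End Projectors.

Section OrderedMonomials.
Variables (A : algType rat) (d : nat) (e f H : A) (r : {poly rat}).
Hypotheses (He : shifts H e 1) (Hf : shifts H f (-1)).
Hypothesis Hef : e * f - f * e = horner_alg H r.
Hypothesis H_ann : \prod_(i < d.+1) (H - i%:R) = 0.
Local Notation ev := (horner_alg H).
Local Notation P := (@proj _ _ d H).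

Definition ef_mono (t : nat * {poly rat} * nat) : A := e ^+ t.1.1 * ev t.1.2 * f ^+ t.2.

Definition efspan (h : nat) : A -> Prop := lincomb ef_mono (fun t => (t.1.1 + t.2 <= h)%N).

Lemma ef_mono_efspan a p c h : (a + c <= h)%N -> efspan h (e ^+ a * ev p * f ^+ c).
Proof. exact: (@lincomb_gen _ _ _ ef_mono _ (a, p, c)). Qed.

Lemma commutator_f_expe a : exists g, f * e ^+ a.+1 - e ^+ a.+1 * f = e ^+ a * ev g.
Proof.
elim: a => [|a [g Hg]]; first by exists (- r); rewrite expr1 expr0 mul1r rmorphN /= -Hef opprB.
exists (g \Po ('X + 1%:P) - r).
have -> : f * e ^+ a.+2 - e ^+ a.+2 * f =
    (f * e ^+ a.+1 - e ^+ a.+1 * f) * e + e ^+ a.+1 * (f * e - e * f).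
  by rewrite [e ^+ a.+2]exprSr mulrBl mulrBr !mulrA addrA subrK.
rewrite Hg -mulrA (horner_alg_shifts _ He) mulrA -exprSr.
by rewrite -[f * e - e * f]opprB Hef rmorphB /= mulrBr mulrN.
Qed.

Lemma efspan_mulf h u : efspan h u -> efspan h.+1 (f * u).
Proof.
move=> hu; apply: (lincomb_map (phi := fun u => f * u)) hu => [k x y|[[a p] c] /= le].
  by rewrite mulrDr scalerAr.
rewrite /ef_mono /=; case: a => [|a] in le *.
  rewrite expr0 !mul1r mulrA (shifts_horner_alg _ Hf) -mulrA -exprS -[ev _]mul1r -(expr0 e).
  by apply: ef_mono_efspan; lia.
have [g Hg] := commutator_f_expe a.
have fe : f * e ^+ a.+1 = e ^+ a.+1 * f + e ^+ a * ev g by rewrite -Hg addrC subrK.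
rewrite !mulrA fe !mulrDl; apply: lincombD.
  rewrite -(mulrA _ f) (shifts_horner_alg _ Hf) mulrA -(mulrA _ f) -exprS.
  by apply: ef_mono_efspan; lia.
by rewrite -(mulrA _ (ev g)) -rmorphM; apply: ef_mono_efspan; lia.
Qed.

Lemma efspan_commutator a c :
  efspan (a + c) (f ^+ c.+1 * e ^+ a.+1 - e ^+ a.+1 * f ^+ c.+1).
Proof.
have [g Hg] := commutator_f_expe a.
elim: c => [|c IH].
  by rewrite expr1 Hg -[_ * ev g]mulr1 -(expr0 f); apply: ef_mono_efspan; lia.
have -> : f ^+ c.+2 * e ^+ a.+1 - e ^+ a.+1 * f ^+ c.+2 =
    f * (f ^+ c.+1 * e ^+ a.+1 - e ^+ a.+1 * f ^+ c.+1)
    + (f * e ^+ a.+1 - e ^+ a.+1 * f) * f ^+ c.+1.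
  by rewrite [f ^+ c.+2]exprS mulrBr mulrBl !mulrA addrA subrK.
apply: lincombD; first by rewrite addnS; apply: efspan_mulf.
by rewrite Hg; apply: ef_mono_efspan; lia.
Qed.

Lemma expe_proj_eq0 a (i : 'I_d.+1) : (d < i + a)%N -> e ^+ a * P i = 0.
Proof.
move=> lt_d; apply: (lweight_eq0 H_ann (l := (i + a)%:R)).
  by rewrite natrD; exact: shifts_lweight (shiftsX a He) (proj_lweight H_ann i).
by move=> j; rewrite eqr_nat; apply: contraTneq lt_d => ->; rewrite -leqNgt -ltnS.
Qed.

Lemma proj_expf_eq0 c (i : 'I_d.+1) : (d < i + c)%N -> P i * f ^+ c = 0.
Proof.
move=> lt_d; apply: (rweight_eq0 H_ann (l := (i + c)%:R)).
  rewrite natrD -[c%:R]opprK -mulNrn.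
  exact: shifts_rweight (shiftsX c Hf) (proj_rweight H_ann i).
by move=> j; rewrite eqr_nat; apply: contraTneq lt_d => ->; rewrite -leqNgt -ltnS.
Qed.

Lemma expf_proj_eq0 c (i : 'I_d.+1) : (i < c)%N -> f ^+ c * P i = 0.
Proof.
move=> lt_c; apply: (lweight_eq0 H_ann (l := i%:R - c%:R)).
  by rewrite -mulNrn; exact: shifts_lweight (shiftsX c Hf) (proj_lweight H_ann i).
move=> j; rewrite subr_eq -natrD eqr_nat; apply: contraTneq lt_c => ->.
by rewrite -leqNgt leq_addl.
Qed.

Lemma proj_mul_expf (c : nat) (i j : 'I_d.+1) :
  j = (i + c)%N :> nat -> P i * f ^+ c = f ^+ c * P j.
Proof.
move=> def_j; rewrite {1}/proj (horner_alg_shifts _ (shiftsX c Hf)) (horner_alg_proj H_ann).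
rewrite mulr_sumr (bigD1 j) //= big1 ?addr0 => [|k kj].
  rewrite horner_comp hornerD hornerX hornerC mulNrn -natrB; last by rewrite def_j leq_addl.
  rewrite def_j addnK.
  by rewrite lagrange_nat ?eqxx ?scale1r // -ltnS.
rewrite -scalerAr; have [lt_kc|le_ck] := ltnP k c; first by rewrite expf_proj_eq0 ?scaler0.
rewrite horner_comp hornerD hornerX hornerC mulNrn -natrB // lagrange_nat; last first.
  by rewrite -ltnS (leq_ltn_trans (leq_subr _ _)).
suff /negbTE -> : (i != k - c :> nat)%N by rewrite scale0r.
by apply: contraNneq kj => def_i; apply/eqP/val_inj; rewrite /= def_j def_i subnK.
Qed.

Definition reduced (h : nat) : A -> Prop :=
  lincomb (monoEF e f H) (fun t => (deg t < d.+1) && (height t < h))%N.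

Lemma reduced_monotone h h' u : (h <= h')%N -> reduced h u -> reduced h' u.
Proof.
move=> le_h; apply: lincomb_sub => t /andP[-> lt_h] /=.
exact: leq_trans lt_h le_h.
Qed.

Lemma monoEF_falling_poly a b c : monoEF e f H (a, b, c) =
  ((a`! * b`! * c`!)%:R : rat)^-1 *: (e ^+ a * ev (falling_poly rat b) * f ^+ c).
Proof.
have -> : ev (falling_poly rat b) = \prod_(i < b) (H - i%:R).
  rewrite rmorph_prod; apply: eq_bigr => i _.
  by rewrite rmorphB /= horner_algX horner_algC scaler_nat.
rewrite /monoEF /divpow /binomA /= -!scalerAl -!scalerAr !scalerA !natrM !invfM.
by rewrite -scalerAl scalerA mulrAC.
Qed.

Lemma reduced_falling_poly h a b c : (a + b + c <= d)%N -> (a + c < h)%N ->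
  reduced h (e ^+ a * ev (falling_poly rat b) * f ^+ c).
Proof.
move=> le_d lt_h; set k : rat := (a`! * b`! * c`!)%:R.
have k_neq0 : k != 0 by rewrite pnatr_eq0 -lt0n !muln_gt0 !fact_gt0.
have -> : e ^+ a * ev (falling_poly rat b) * f ^+ c = k *: monoEF e f H (a, b, c).
  by rewrite monoEF_falling_poly scalerA mulfV ?scale1r.
apply/lincombZ/lincomb_gen; rewrite /deg /height /=.
by apply/andP; split; lia.
Qed.

Definition reduced_below (h : nat) : Prop :=
  forall a c p, (a + c < h)%N -> reduced h (e ^+ a * ev p * f ^+ c).

Lemma proj_reduced a c (i : 'I_d.+1) : reduced_below (a + c) -> (d < i + a + c)%N ->
  reduced (a + c) (e ^+ a * P i * f ^+ c).
Proof.
move=> IH lt_d; have [lt_ic|le_ic] := ltnP d (i + c).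
  by rewrite -mulrA proj_expf_eq0 // mulr0; exact: lincomb0.
have [lt_ia|le_ia] := ltnP d (i + a); first by rewrite expe_proj_eq0 // mul0r; exact: lincomb0.
case: a c => [|a'] [|c'] in IH lt_d le_ic le_ia *; try lia.
pose j := Ordinal (le_ic : (i + c'.+1 < d.+1)%N).
rewrite -mulrA (proj_mul_expf (j := j)) // mulrA.
have -> : e ^+ a'.+1 * f ^+ c'.+1 * P j =
    - ((f ^+ c'.+1 * e ^+ a'.+1 - e ^+ a'.+1 * f ^+ c'.+1) * P j).
  by rewrite mulrBl -[f ^+ _ * _ * _]mulrA expe_proj_eq0 ?mulr0 ?sub0r ?opprK //=; lia.
rewrite -scaleN1r; apply: lincombZ.
apply: (lincomb_map (phi := fun u => u * P j)) (efspan_commutator a' c').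
  by move=> k x y; rewrite mulrDl scalerAl.
move=> [[a'' p] c''] /= le.
rewrite /ef_mono /proj /= -(mulrA _ (f ^+ c'')) (shifts_horner_alg _ (shiftsX c'' Hf)).
by rewrite mulrA -(mulrA (e ^+ a'')) -rmorphM; apply: IH; lia.
Qed.

Lemma falling_poly_reduced a b c : reduced_below (a + c) -> (d < a + b + c)%N ->
  reduced (a + c) (e ^+ a * ev (falling_poly rat b) * f ^+ c).
Proof.
move=> IH lt_d; rewrite (horner_alg_proj H_ann) mulr_sumr mulr_suml; apply: lincomb_sum => i _.
rewrite -scalerAr -scalerAl; have [lt_ib|le_bi] := ltnP i b.
  rewrite /falling_poly horner_prod (bigD1 (Ordinal lt_ib)) //= hornerXsubC subrr.
  by rewrite mul0r scale0r; exact: lincomb0.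
by apply/lincombZ/proj_reduced => //; lia.
Qed.

Lemma ef_mono_reduced a c p : reduced (a + c).+1 (e ^+ a * ev p * f ^+ c).
Proof.
have [h] := ubnP (a + c); elim: h a c p => // h IHh a c p lt_h.
have IH : reduced_below (a + c).
  by move=> a' c' q lt_ac; apply: reduced_monotone (IHh _ _ _ _) => //; lia.
apply: (lincomb_map (phi := fun q => e ^+ a * ev q * f ^+ c)) (falling_poly_span p).
  by move=> k q q'; rewrite linearP /= mulr_algl mulrDr mulrDl -scalerAr -scalerAl.
move=> b _.
have [le_d|lt_d] := leqP (a + b + c) d; first exact: reduced_falling_poly.
by apply: reduced_monotone (falling_poly_reduced IH lt_d).
Qed.

Lemma monoEF_reduced a b c : (a + b + c)%N = d.+1 -> reduced (a + c) (monoEF e f H (a, b, c)).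
Proof.
move=> abc; rewrite monoEF_falling_poly; apply/lincombZ/falling_poly_reduced; last lia.
by move=> a' c' p lt_ac; apply: reduced_monotone (ef_mono_reduced _ _ _).
Qed.

End OrderedMonomials.

Lemma Bd_rel_swap d (A : algType rat) (e f H1 H2 : A) :
  Bd_rel d e f H1 H2 -> Bd_rel d f e H2 H1.
Proof.
move=> [H12 [He1 [Hf1 [He2 [Hf2 [Hef [Hsum Hann]]]]]]].
do 5!(split; first by []).
split; first by rewrite -opprB Hef opprB.
split; first by rewrite addrC.
have -> : H2 = d%:R - H1 by rewrite -Hsum [H1 + H2]addrC addrK.
have -> : \prod_(i < d.+1) (d%:R - H1 - i%:R) =
    horner_alg H1 (\prod_(i < d.+1) (d%:R%:P - 'X - i%:R%:P)).
  rewrite rmorph_prod; apply: eq_bigr => i _.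
  by rewrite !rmorphB /= horner_algX !horner_algC !scaler_nat.
rewrite (horner_alg_proj Hann) big1 // => k _.
rewrite horner_prod (bigD1 (rev_ord k)) //= !hornerE subSS natrB; last by rewrite -ltnS.
by rewrite subrr mul0r scale0r.
Qed.

Lemma Bd_rel_monoEF_reduced d (A : algType rat) (e f H1 H2 : A) :
  Bd_rel d e f H1 H2 -> forall a b c, (a + b + c)%N = d.+1 ->
  reduced d e f H1 (a + c) (monoEF e f H1 (a, b, c)).
Proof.
move=> [_ [He1 [Hf1 [_ [_ [Hef [Hsum Hann]]]]]]].
have He : shifts H1 e 1.
  by move/eqP: He1; rewrite subr_eq /shifts scale1r mulrDr mulr1 addrC => /eqP.
have Hf : shifts H1 f (-1).
  by move/eqP: Hf1; rewrite subr_eq /shifts scaleN1r mulrDr mulrN1 addrC => /eqP.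
apply: (monoEF_reduced He Hf (r := 'X - (d%:R%:P - 'X))) Hann.
by rewrite Hef !rmorphB /= horner_algX horner_algC scaler_nat -Hsum [H1 + H2]addrC addrK.
Qed.

Theorem theorem4p5 (d : nat) (A : algType rat) (e f H1 H2 : A) :
  Bd_rel d e f H1 H2 ->
  (forall a b c : nat, (a + b + c)%N = d.+1 ->
     exists s : seq (rat * (nat * nat * nat)),
       all (fun p => (deg p.2 < d.+1)%N && (height p.2 < a + c)%N) s /\
       monoEF e f H1 (a, b, c) = \sum_(p <- s) p.1 *: monoEF e f H1 p.2) /\
  (forall a b c : nat, (a + b + c)%N = d.+1 ->
     exists s : seq (rat * (nat * nat * nat)),
       all (fun p => (deg p.2 < d.+1)%N && (height p.2 < a + c)%N) s /\
       monoFE e f H2 (a, b, c) = \sum_(p <- s) p.1 *: monoFE e f H2 p.2).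
Proof.
move=> Bd; split; first exact: Bd_rel_monoEF_reduced Bd.
(* [monoFE e f H2] is convertible to [monoEF f e H2]. *)
exact: Bd_rel_monoEF_reduced (Bd_rel_swap Bd).
Qed.
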